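(* Let $\psi,\varphi$ be CNF formulas that contain no tautological clauses, and let $X\subseteq\mathrm{Vars}(\psi)\cup\mathrm{Vars}(\varphi)$. If $\psi\models\varphi$, then $\psi[Y]\models\varphi[Y]$ for every $Y\in\mathcal{A}_3(X)$.
   Context: A clause is tautological if it contains both $x$ and $\neg x$. An extended literal is a literal or a fresh symbol $x_\varepsilon$ for a variable $x$. For a CNF formula $\phi$: if $\ell$ is a literal, $\phi[\ell]$ deletes all clauses containing $\ell$ and deletes the complementary literal $\sim\!\ell$ from the remaining clauses; $\phi[x_\varepsilon]$ deletes all occurrences of $x$ and $\neg x$ from all clauses. $\mathcal{A}_3(X)$ is the set of all sets $\{a_x : x\in X\}$ with $a_x\in\{x,\neg x,x_\varepsilon\}$; for $Y\in\mathcal{A}_3(X)$, $\phi[Y]$ is the successive application of the reducts by all elements of $Y$ (order irrelevant). *)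

From mathcomp Require Import all_boot.
Set Implicit Arguments. Unset Strict Implicit. Unset Printing Implicit Defensive.

(* Variables are natural numbers; a literal (x, true) is x, (x, false) is ~x. *)
Definition var := nat.
Definition lit := (nat * bool)%type.
Definition clause := seq lit.
Definition cnf := seq clause.

Definition compl (l : lit) : lit := (l.1, ~~ l.2).

Definition tautological (C : clause) : bool :=
  has (fun l => compl l \in C) C.

Definition vars (phi : cnf) : seq var := [seq l.1 | l <- flatten phi].

Definition sat_lit (a : var -> bool) (l : lit) : bool := a l.1 == l.2.
Definition sat_clause (a : var -> bool) (C : clause) : bool := has (sat_lit a) C.
Definition sat (a : var -> bool) (phi : cnf) : bool := all (sat_clause a) phi.

Definition entails (psi phi : cnf) : Prop :=
  forall a : var -> bool, sat a psi -> sat a phi.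

Inductive elit := ELit of lit | EEps of var.

Definition reduct_lit (phi : cnf) (l : lit) : cnf :=
  [seq [seq m <- C | m != compl l] | C <- phi & l \notin C].

Definition reduct_eps (phi : cnf) (x : var) : cnf :=
  [seq [seq m <- C | m.1 != x] | C <- phi].

Definition reduct (phi : cnf) (e : elit) : cnf :=
  match e with ELit l => reduct_lit phi l | EEps x => reduct_eps phi x end.

Inductive choice3 := CPos | CNeg | CEps.

Definition elit_of (x : var) (c : choice3) : elit :=
  match c with CPos => ELit (x, true) | CNeg => ELit (x, false) | CEps => EEps x end.

(* An element Y = {a_x : x in X} of A_3(X) is given by a choice function
   ch : var -> choice3 (only its values on X matter); phi[Y] is the
   successive application of the reducts by all a_x, x in X. *)
Definition A3_elems (X : seq var) (ch : var -> choice3) : seq elit :=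
  [seq elit_of x (ch x) | x <- X].

Definition reduct_set (phi : cnf) (Y : seq elit) : cnf := foldl reduct phi Y.

(* Reducing by a literal l is, semantically, fixing the variable of l so that l
   becomes true; hence every model a of psi[l] extends to the model a[x := l]
   of psi, then of phi, and restricts back to a model of phi[l].  Reducing by
   x_eps forgets x: a model of psi[x_eps] is a model of psi whatever the value
   of x, so of phi for both values of x.  A clause C of phi that is not
   tautological cannot contain both x and ~x, so some value of x falsifies
   its x-literal, and C is then satisfied by a literal surviving in C[x_eps].
   Non-tautology is preserved by reducts, so the argument iterates over any
   sequence of extended literals. *)

From mathcomp Require Import all_boot.

Definition nontautological (phi : cnf) : bool :=
  all (fun C => ~~ tautological C) phi.

Definition set_var (a : var -> bool) (x : var) (b : bool) : var -> bool :=
  fun y => if y == x then b else a y.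

Lemma sat_lit_set_var a x b (m : lit) :
  sat_lit (set_var a x b) m = if m.1 == x then b == m.2 else sat_lit a m.
Proof. by rewrite /sat_lit /set_var; case: (m.1 == x). Qed.

Lemma lit_var_eq (m l : lit) : m.1 = l.1 -> m != l -> m = compl l.
Proof. by case: m l => [m1 m2] [l1 l2] /= -> /eqP; case: m2; case: l2. Qed.

Lemma sat_lit_set_var_compl a (l : lit) :
  sat_lit (set_var a l.1 l.2) (compl l) = false.
Proof. by rewrite sat_lit_set_var eqxx; case: l => ? []. Qed.

Lemma sat_reduct_lit a phi (l : lit) :
  sat a (reduct_lit phi l) = sat (set_var a l.1 l.2) phi.
Proof.
rewrite /sat all_map all_filter; apply: eq_all => C /=.
case: (boolP (l \in C)) => [lC | lNC] /=.
  by symmetry; apply/hasP; exists l; rewrite // sat_lit_set_var !eqxx.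
rewrite /sat_clause has_filter -filter_predI -has_filter.
apply: eq_in_has => m Cm /=; have [ml | mNl] := eqVneq m.1 l.1.
  have -> : m = compl l by apply: lit_var_eq => //; apply: contraNneq lNC => <-.
  by rewrite sat_lit_set_var_compl eqxx andbF.
rewrite sat_lit_set_var (negbTE mNl) andb_idr //.
by move=> _; apply: contra_neq mNl => ->.
Qed.

Lemma sat_set_var_of_reduct_eps a phi x b :
  sat a (reduct_eps phi x) -> sat (set_var a x b) phi.
Proof.
move=> /allP sat_red; apply/allP => C phiC.
have /hasP [m] := sat_red _ (map_f _ phiC).
rewrite mem_filter => /andP [mNx Cm] am.
by apply/hasP; exists m; rewrite // sat_lit_set_var (negbTE mNx).
Qed.

Lemma sat_reduct_eps a phi x :
  nontautological phi ->
  (forall b, sat (set_var a x b) phi) -> sat a (reduct_eps phi x).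
Proof.
move=> /allP ntphi sat_phi; apply/allP => _ /mapP [C phiC ->].
(* Give x the value that falsifies the x-literals of C. *)
have /allP /(_ C phiC) /hasP [m Cm] := sat_phi ((x, false) \in C).
rewrite sat_lit_set_var; case: eqP => [mx | /eqP mNx am]; last first.
  by apply/hasP; exists m; rewrite // mem_filter Cm mNx.
case: m mx Cm => _ b /= -> Cm /eqP bE; subst b.
have /hasPn ntC := ntphi C phiC.
case: (boolP ((x, false) \in C)) => xC in Cm *; last by rewrite Cm in xC.
by have := ntC _ Cm; rewrite /compl /= xC.
Qed.

Lemma nontautological_filter p (C : clause) :
  ~~ tautological C -> ~~ tautological (filter p C).
Proof.
apply: contra => /hasP [l]; rewrite !mem_filter => /andP [_ Cl'] /andP [_ Cl].
by apply/hasP; exists l.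
Qed.

Lemma nontautological_reduct phi e :
  nontautological phi -> nontautological (reduct phi e).
Proof.
move=> /allP ntphi; apply/allP => C'.
case: e => [l|x] /= /mapP [C]; last first.
  by move=> phiC ->; apply/nontautological_filter/ntphi.
by rewrite mem_filter => /andP [_ phiC] ->; apply/nontautological_filter/ntphi.
Qed.

Lemma entails_reduct psi phi e :
  nontautological phi -> entails psi phi -> entails (reduct psi e) (reduct phi e).
Proof.
move=> ntphi psi_phi a; case: e => [l|x] /=.
  by rewrite !sat_reduct_lit; apply: psi_phi.
move=> sat_psi; apply: sat_reduct_eps => // b.
exact/psi_phi/sat_set_var_of_reduct_eps.
Qed.

Lemma entails_reduct_set psi phi (Y : seq elit) :
  nontautological phi -> entails psi phi ->
  entails (reduct_set psi Y) (reduct_set phi Y).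
Proof.
elim: Y psi phi => [|e Y IH] psi phi ntphi psi_phi //=.
by apply: IH; [apply: nontautological_reduct | apply: entails_reduct].
Qed.

Theorem mainTheorem6 (psi phi : cnf) (X : seq var) :
  all (fun C => ~~ tautological C) psi ->
  all (fun C => ~~ tautological C) phi ->
  {subset X <= vars psi ++ vars phi} ->
  entails psi phi ->
  forall ch : var -> choice3,
    entails (reduct_set psi (A3_elems X ch)) (reduct_set phi (A3_elems X ch)).
Proof.
move=> _ ntphi _ psi_phi ch.
exact: entails_reduct_set.
Qed.
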